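(* Let $n,x$ be integers with $1<x<n$, so that $G=C_{2n}(x,1,n)$ is a $5$-regular circulant graph. If $n\equiv x\equiv 1 \pmod 3$, then $G$ is word-representable.
   Context: Two distinct letters $x,y$ alternate in a word $w$ if, after deleting all other letters from $w$, the resulting word is of the form $xyxy\cdots$ or $yxyx\cdots$ (of even or odd length). A graph $G=(V,E)$ is word-representable if there is a word $w$ over the alphabet $V$, containing every letter of $V$ at least once, such that for all distinct $x,y\in V$, $xy\in E$ if and only if $x$ and $y$ alternate in $w$. For an integer $m$ and a set $R$ of positive integers each at most $m/2$, the circulant graph $C_m(R)$ has vertex set $\{0,1,\dots,m-1\}$, with $i$ and $j$ adjacent iff $\min(|i-j|,\,m-|i-j|)\in R$. $C_{2n}(x,1,n)$ denotes the circulant graph on $2n$ vertices with jump set $\{1,x,n\}$; it is $5$-regular exactly when $1<x<n$. *)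

From mathcomp Require Import ssreflect ssrfun ssrbool eqtype ssrnat seq path div fintype.
Set Implicit Arguments. Unset Strict Implicit. Unset Printing Implicit Defensive.

Definition alternate (V : eqType) (w : seq V) (x y : V) : bool :=
  sorted (fun a b => a != b) [seq z <- w | (z == x) || (z == y)].

Definition word_representable (V : finType) (adj : rel V) : Prop :=
  exists w : seq V, (forall v : V, v \in w) /\
    (forall x y : V, x != y -> (adj x y <-> alternate w x y)).

Definition circ_dist (m i j : nat) : nat :=
  let d := maxn i j - minn i j in minn d (m - d).

Definition circulant (m : nat) (R : pred nat) : rel 'I_m :=
  fun i j => R (circ_dist m i j).

Definition C2n_x1n (n x : nat) : rel 'I_(2 * n) :=
  @circulant (2 * n) (fun d => [|| d == 1, d == x | d == n]).

From mathcomp Require Import ssreflect ssrfun ssrbool eqtype ssrnat seq path div fintype.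
From mathcomp Require Import zify.
Set Implicit Arguments. Unset Strict Implicit. Unset Printing Implicit Defensive.

(* Colour vertex i of C_{2n}(x,1,n) by i mod 3 if i < n and by (i+1) mod 3 otherwise.  This is
   i mod 3 on the cycle Z_{2n+1} obtained by inserting one vertex just before n; since 3 divides
   2n+1 and every edge becomes a jump of 1, 2, x, x+1, n or n+1 on that cycle, none of them
   divisible by 3, the colouring is proper.

   Every 3-colourable graph is word-representable.  Let T list the vertices sorted by colour and
   follow T by one segment per vertex z of T, in the order of T; the segment of z contains every
   other vertex once and z twice, with exactly the neighbours of z between the two copies of z.
   A non-edge uv is then broken by the factor uu of the segment of u restricted to {u, v}.  For
   an edge uv with col u < col v the segments restrict to uv, uvu, vu, vuv, uv as z runs before
   u, at u, between u and v, at v and after v, so the whole word restricted to {u, v}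
   alternates. *)

Lemma path_flatten_iota (A : Type) (e : rel A) (x : nat -> A) (s : nat -> seq A) m n :
  (forall i, m <= i < m + n -> path e (x i) (s i) /\ last (x i) (s i) = x i.+1) ->
  path e (x m) (flatten [seq s i | i <- iota m n]).
Proof.
elim: n m => // n IHn m step /=.
have [path_m last_m] := step m ltac:(lia).
rewrite cat_path path_m last_m; apply: IHn => i ?; apply: step; lia.
Qed.

Lemma filter_pred2_index (A : eqType) (s : seq A) (u v : A) :
  uniq s -> u \in s -> v \in s -> index u s < index v s ->
  [seq y <- s | (y == u) || (y == v)] = [:: u; v].
Proof.
elim: s => // a s IHs /= /andP[a_notin uniq_s].
rewrite !inE; case: (eqVneq a u) => [<-|au].
  move=> _ v_in; case: (eqVneq a v) => //= av _.
  have {}v_in : v \in s by rewrite eq_sym (negbTE av) in v_in.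
  rewrite -(filter_pred1_uniq uniq_s v_in); congr (_ :: _).
  by apply: eq_in_filter => y ys; case: eqVneq ys => // ->; rewrite (negbTE a_notin).
case: (eqVneq a v) => [<-|av] //= u_in v_in; by rewrite ltnS; apply: IHs.
Qed.

Lemma filter_pred2C (A : eqType) (s : seq A) (u v : A) :
  [seq y <- s | (y == u) || (y == v)] = [seq y <- s | (y == v) || (y == u)].
Proof. by apply: eq_filter => y; apply: orbC. Qed.

Lemma alternateC (A : eqType) (w : seq A) (u v : A) : alternate w u v = alternate w v u.
Proof. by rewrite /alternate filter_pred2C. Qed.

Lemma circulant_sym m (R : pred nat) : symmetric (@circulant m R).
Proof. by move=> i j; rewrite /circulant /circ_dist (maxnC i) (minnC i). Qed.

Section ThreeColourable.

Variables (V : finType) (adj : rel V) (col : V -> 'I_3).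

Hypothesis adjC : symmetric adj.

Definition colour_sorted : seq V := sort [rel a b | col a <= col b] (enum V).
Local Notation T := colour_sorted.

Definition rank (v : V) : nat := index v T.

Lemma mem_colour_sorted v : v \in T.
Proof. by rewrite mem_sort mem_enum. Qed.

Lemma colour_sorted_uniq : uniq T.
Proof. by rewrite sort_uniq enum_uniq. Qed.

Lemma rank_inj : injective rank.
Proof. move=> a b; exact: index_inj (mem_colour_sorted a) (mem_colour_sorted b). Qed.

Lemma rank_lt_col a b : col a < col b -> rank a < rank b.
Proof.
have le_tr : transitive [rel a b : V | col a <= col b] by move=> ? ? ?; apply: leq_trans.
have le_refl : reflexive [rel a b : V | col a <= col b] by move=> ?; apply: leqnn.
have T_sorted : sorted [rel a b | col a <= col b] T.
  by apply: sort_sorted => a' b'; apply: leq_total.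
rewrite ltnNge; apply: contraNT; rewrite -leqNgt.
exact: (sorted_leq_index le_tr le_refl T_sorted b a (mem_colour_sorted b) (mem_colour_sorted a)).
Qed.

Definition colour_gap (z y : V) : nat := (col y + 3 - col z) %% 3.

(* Slots of [segment z]: later vertices of the colour of z (0), non-neighbours (1) and
   neighbours (3) of the next colour, neighbours (4) and non-neighbours (6) of the colour after,
   earlier vertices of the colour of z (7); z itself fills slots 2 and 5. *)
Definition slot (z y : V) : nat :=
  match colour_gap z y with
  | 0 => if rank z < rank y then 0 else 7
  | 1 => if adj z y then 3 else 1
  | _ => if adj z y then 4 else 6
  end.

Definition block (z : V) (k : nat) : seq V :=
  if k \in [:: 2; 5] then [:: z] else [seq y <- T | (y != z) && (slot z y == k)].

Definition segment (z : V) : seq V := flatten [seq block z k | k <- iota 0 8].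

Definition colour_word : seq V := T ++ flatten [seq segment z | z <- T].

Lemma slot_range z y : slot z y \in [:: 0; 1; 3; 4; 6; 7].
Proof. by rewrite /slot; case: colour_gap => [|[|?]]; repeat case: ifP. Qed.

Lemma slot_order u v z : col u < col v -> z != u -> z != v ->
  if rank u < rank z < rank v then slot z v < slot z u else slot z u < slot z v.
Proof.
move=> lt_uv zu zv.
have rank_neq a b : a != b -> rank a != rank b by apply: contra => /eqP/rank_inj ->.
have := rank_neq _ _ zu; have := rank_neq _ _ zv.
have := @rank_lt_col u z; have := @rank_lt_col z u; have := @rank_lt_col z v.
have := @rank_lt_col v z; have := rank_lt_col lt_uv.
have := ltn_ord (col u); have := ltn_ord (col v); have := ltn_ord (col z).
rewrite /slot /colour_gap; move: (rank u) (rank v) (rank z) => ru rv rz.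
case: (adj z u); case: (adj z v);
  case Eu: ((col u + 3 - col z) %% 3) => [|[|?]];
  case Ev: ((col v + 3 - col z) %% 3) => [|[|?]];
  repeat case: ifP; lia.
Qed.

Lemma filter_segment (P : pred V) z :
  [seq y <- segment z | P y] =
  flatten [seq if k \in [:: 2; 5] then [seq y <- [:: z] | P y]
               else [seq y <- [seq y <- T | P y && (y != z)] | slot z y == k]
          | k <- iota 0 8].
Proof.
rewrite /segment filter_flatten -map_comp; congr flatten; apply: eq_map => k /=.
rewrite /block; case: ifP => // _; rewrite -!filter_predI; apply: eq_filter => y /=.
by rewrite [RHS]andbC -andbA.
Qed.

Lemma filter_segment_other u v z : col u < col v -> z != u -> z != v ->
  [seq y <- segment z | (y == u) || (y == v)] =
  if rank u < rank z < rank v then [:: v; u] else [:: u; v].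
Proof.
move=> lt_uv zu zv; rewrite filter_segment /= (negbTE zu) (negbTE zv).
have -> : [seq y <- T | ((y == u) || (y == v)) && (y != z)] = [:: u; v].
  rewrite -(filter_pred2_index colour_sorted_uniq (mem_colour_sorted u)
              (mem_colour_sorted v) (rank_lt_col lt_uv)).
  apply: eq_filter => y /=; case: (eqVneq y z) => [->|_]; last by rewrite andbT.
  by rewrite andbF (negbTE zu) (negbTE zv).
rewrite /=; have := slot_order lt_uv zu zv; have := slot_range z u; have := slot_range z v.
by case: ifP => _; case: (slot z u) => [|[|[|[|[|[|[|[|?]]]]]]]];
  case: (slot z v) => [|[|[|[|[|[|[|[|?]]]]]]]].
Qed.

Lemma filter_segment_self u v : u != v ->
  [seq y <- segment u | (y == u) || (y == v)] =
  if slot u v < 2 then [:: v; u; u] else if slot u v < 5 then [:: u; v; u] else [:: u; u; v].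
Proof.
move=> uv; rewrite filter_segment /= eqxx.
have -> : [seq y <- T | ((y == u) || (y == v)) && (y != u)] = [:: v].
  rewrite -(filter_pred1_uniq colour_sorted_uniq (mem_colour_sorted v)).
  apply: eq_filter => y /=; case: (eqVneq y u) => [->|_]; last by rewrite andbT.
  by rewrite andbF (negbTE uv).
by rewrite /=; have := slot_range u v; case: (slot u v) => [|[|[|[|[|[|[|[|?]]]]]]]].
Qed.

Lemma filter_segment_adj u v : adj u v -> col u != col v ->
  [seq y <- segment u | (y == u) || (y == v)] = [:: u; v; u].
Proof.
move=> uv ne_col; have neq_uv : u != v by apply: contraNneq ne_col => ->.
have : 3 <= slot u v <= 4.
  move: ne_col; rewrite -val_eqE /slot /colour_gap uv /=.
  have := ltn_ord (col u); have := ltn_ord (col v).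
  by case E: ((col v + 3 - col u) %% 3) => [|[|?]]; lia.
by rewrite filter_segment_self // => /andP[ge3 le4]; rewrite ltnNge ltnW // ltnS le4.
Qed.

Lemma filter_segment_nonadj u v : u != v -> ~~ adj u v ->
  ~~ sorted (fun a b => a != b) [seq y <- segment u | (y == u) || (y == v)].
Proof.
move=> neq_uv /negbTE uv; rewrite filter_segment_self //.
have : (slot u v < 2) || (5 < slot u v).
  by rewrite /slot uv; case: colour_gap => [|[|?]] //; case: ifP.
move=> range; case: ifP => [_|ge2]; last case: ifP => [lt5|_]; rewrite /= ?eqxx ?andbF //; lia.
Qed.

Lemma alternate_colour_word_edge u v :
  adj u v -> col u < col v -> alternate colour_word u v.
Proof.
move=> uv lt_uv.
have ne_col : col u != col v by rewrite -val_eqE ltn_eqF.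
have neq_uv : u != v by apply: contraNneq ne_col => ->.
have lt_rank := rank_lt_col lt_uv.
rewrite /alternate /colour_word filter_cat filter_flatten -map_comp.
rewrite (filter_pred2_index colour_sorted_uniq (mem_colour_sorted u) (mem_colour_sorted v)
           lt_rank).
rewrite -(mkseq_nth u T) /mkseq -map_comp /= neq_uv /=.
(* [phase i] is the last letter of the restriction to {u, v} of T and the first i segments. *)
pose phase i := if rank u < i <= rank v then u else v.
apply: (@path_flatten_iota _ _ phase) => i /andP[_ lt_i] /=.
have rank_z : rank (nth u T i) = i by rewrite /rank index_uniq ?colour_sorted_uniq.
move: (nth u T i) rank_z => z <-; rewrite /phase.
have [-> | zu] := eqVneq z u.
  by rewrite filter_segment_adj // ltnn ltnSn lt_rank /= eq_sym neq_uv.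
have [-> | zv] := eqVneq z v.
  rewrite filter_pred2C filter_segment_adj 1?adjC 1?eq_sym //.
  by rewrite lt_rank leqnn ltnn andbF /= (eq_sym v u) neq_uv.
have rank_zu : rank z != rank u by apply: contra zu => /eqP/rank_inj ->.
have rank_zv : rank z != rank v by apply: contra zv => /eqP/rank_inj ->.
rewrite filter_segment_other //.
case: ifP => [b1|/negbT b1]; case: ifP => [b2|/negbT b2]; case: ifP => [b3|/negbT b3];
  by rewrite /= ?(eq_sym v u) ?neq_uv //; lia.
Qed.

Lemma alternate_colour_word_nonadj u v :
  u != v -> ~~ adj u v -> ~~ alternate colour_word u v.
Proof.
move=> neq_uv uv; apply: contra (filter_segment_nonadj neq_uv uv); apply: infix_sorted.
set seg_u := [seq y <- segment u | _].
rewrite /colour_word filter_cat filter_flatten -map_comp.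
case/splitPr: (mem_colour_sorted u) => T1 T2; rewrite map_cat flatten_cat /=.
by apply/infix_catl/infix_catl/prefix_infix.
Qed.

Theorem three_colourable_word_representable :
  (forall a b, adj a b -> col a != col b) -> word_representable adj.
Proof.
move=> proper; exists colour_word; split => [v | u v neq_uv].
  by rewrite mem_cat mem_colour_sorted.
split => [uv | alt_uv]; last first.
  by apply: contraTT alt_uv; apply: alternate_colour_word_nonadj.
have := proper _ _ uv; rewrite -val_eqE neq_ltn => /orP[lt_uv | lt_vu].
  exact: alternate_colour_word_edge.
by rewrite alternateC; apply: alternate_colour_word_edge; rewrite // adjC.
Qed.

End ThreeColourable.

Definition gap_colour (n i : nat) : 'I_3 := inord ((if i < n then i else i.+1) %% 3).

Lemma gap_colour_proper n x (i j : 'I_(2 * n)) : n %% 3 = 1 -> x %% 3 = 1 ->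
  @C2n_x1n n x i j -> gap_colour n i != gap_colour n j.
Proof.
move=> n3 x3; rewrite /C2n_x1n /circulant /circ_dist -val_eqE /= !inordK ?ltn_pmod //.
by case: i j => [i lt_i] [j lt_j] /=; case: ifP; case: ifP; lia.
Qed.

Theorem corollary1 (n x : nat) :
  1 < x -> x < n -> n %% 3 = 1 -> x %% 3 = 1 ->
  word_representable (@C2n_x1n n x).
Proof.
(* 1 < x < n only makes the graph 5-regular; the colouring does not need it. *)
move=> _ _ n3 x3.
apply: (@three_colourable_word_representable _ _ (fun i : 'I_(2 * n) => gap_colour n i)).
  exact: circulant_sym.
by move=> i j; apply: gap_colour_proper.
Qed.
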